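(* Let $D\subset\mathbb{C}$ be an open disk centered at $0$, $f_1,\dots,f_p:D\to\mathbb{C}$ analytic, $A_1,\dots,A_p\in\mathbb{C}^{n\times n}$ with $M(\lambda)=\sum_{m=1}^p f_m(\lambda)A_m$ satisfying $M(\lambda)^T=M(\lambda)$ on $D$, and $M_j:=M^{(j)}(0)$. Let $\mathbf{C}=[c_{i,j}]$ be the infinite matrix determined by $c_{i,1}=1/(i+1)$ ($i\ge1$) and $c_{i-1,j}=\frac{j}{i}c_{i,j-1}$ ($i,j>1$); let $\mathbf{S}$ be the infinite block matrix with $S_{1,1}=I$, $S_{1,j}=S_{j,1}=0$ ($j\ge2$), $S_{i,j}=c_{i-1,j-1}M_{i+j-2}$ ($i,j\ge2$); let $\mathbf{A}=\operatorname{diag}(-M_0,I,I,\dots)$; and let $\mathbf{B}$ have first block row $(M_1,\frac12M_2,\frac13M_3,\dots)$, blocks $\frac1jI$ in positions $(j+1,j)$, and zeros elsewhere. For a positive integer $N$, $[\mathbf{X}]_N$ denotes the leading $Nn\times Nn$ submatrix formed by the first $N\times N$ blocks. Let $k$ be a positive integer with $k+1\le N$, assume $[\mathbf{S}]_{2N}$ is invertible (and $[\mathbf{S}\mathbf{A}]_N$ is invertible, as implicit in the statement). Let $q_k\in\mathbb{C}^{Nn}$ be a vector, viewed as $N$ blocks in $\mathbb{C}^n$, such that only its first $k$ blocks are nonzero, these being the columns of $Q_k=[\tilde q_1,\dots,\tilde q_k]\in\mathbb{C}^{n\times k}$. Then only the first $k+1$ blocks of $w=[\mathbf{S}\mathbf{A}]_N^{-1}[\mathbf{S}\mathbf{B}]_Nq_k$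 are nonzero, and these are the columns of $W=[w_1,\dots,w_{k+1}]$ given by $$W=w_1e_1^T+Q_kD,\qquad w_1=-M_0^{-1}\sum_{j=1}^k\frac{M_j}{j}\tilde q_j,$$ where $D\in\mathbb{R}^{k\times(k+1)}$ has entries $d_{j,j+1}=1/j$ ($j=1,\dots,k$) and all other entries zero, and $e_1\in\mathbb{R}^{k+1}$ is the first unit vector.
   Context: Matrices and vectors are complex; transpose $^T$ is the plain (non-conjugate) transpose. *)

From HB Require Import structures.
From mathcomp Require Import all_boot all_order all_algebra.
From mathcomp Require Import all_classical all_reals topology normedtype sequences derive.
From mathcomp.real_closed Require Import complex.
Set Implicit Arguments.
Unset Strict Implicit.
Unset Printing Implicit Defensive.
Import Order.TTheory GRing.Theory Num.Theory.
Import numFieldNormedType.Exports.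
Local Open Scope ring_scope.
Local Open Scope classical_set_scope.

Section Defs.
Variable R : realType.
Local Notation C := R[i].

Definition disk0 (r : R) : set C := [set z : C | `|z| < (r%:C)%C].

Definition analytic_on (U : set C) (g : C -> C) : Prop :=
  forall z0, U z0 -> exists a : nat -> C, exists2 rho : R, 0 < rho &
    forall z : C, `|z - z0| < (rho%:C)%C ->
      (series (fun k => (a k * (z - z0) ^+ k : C^o)) @ \oo --> (g z : C^o)).

Definition cderiv (j : nat) (g : C -> C) (z : C) : C :=
  derive1n j (g : C -> C^o) z.

Definition mxderiv0 (n : nat) (Mf : C -> 'M[C]_n) (j : nat) : 'M[C]_n :=
  \matrix_(a, b) cderiv j (fun z => Mf z a b) 0.

(* Infinite block matrices, 1-indexed as in the paper: X i j is the    *)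
(* (i,j) block (i, j >= 1); values at index 0 are never used.          *)
Definition bmx (n : nat) := nat -> nat -> 'M[C]_n.

(* the coefficients c_{i,j} (i, j >= 1):
   c_{i,1} = 1/(i+1),  c_{i,j} = j/(i+1) * c_{i+1,j-1}  (j > 1),
   the latter being the relation c_{i-1,j} = (j/i) c_{i,j-1} with i -> i+1.
   ccoef_aux j' i = c_{i, j'+1}. *)
Fixpoint ccoef_aux (j' : nat) (i : nat) : C :=
  match j' with
  | 0 => (i.+1%:R)^-1
  | j''.+1 => (j''.+2%:R / i.+1%:R) * ccoef_aux j'' i.+1
  end.
Definition ccoef (i j : nat) : C := ccoef_aux j.-1 i.

Definition Sbmx (n : nat) (Mj : nat -> 'M[C]_n) : bmx n := fun i j =>
  if (i == 1%N) && (j == 1%N) then 1%:M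
  else if (i == 1%N) || (j == 1%N) then 0
  else ccoef i.-1 j.-1 *: Mj (i + j - 2)%N.

Definition Abmx (n : nat) (Mj : nat -> 'M[C]_n) : bmx n := fun i j =>
  if i == j then (if i == 1%N then - Mj 0%N else 1%:M) else 0.

Definition Bbmx (n : nat) (Mj : nat -> 'M[C]_n) : bmx n := fun i j =>
  if i == 1%N then (j%:R)^-1 *: Mj j
  else if i == j.+1 then (j%:R)^-1 *: 1%:M
  else 0.

(* Product X Y of infinite block matrices, for a right factor Y whose
   block column j has nonzero blocks only in rows l <= j+1 (upper
   Hessenberg block pattern).  Then the (infinite) sum
   sum_{l >= 1} X_{i,l} Y_{l,j} reduces exactly to the finite sum below. *)
Definition bmx_mulH (n : nat) (X Y : bmx n) : bmx n := fun i j =>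
  \sum_(1 <= l < j.+2) X i l *m Y l j.

Definition hess_pattern (n : nat) (Y : bmx n) : Prop :=
  forall l j, (j.+1 < l)%N -> Y l j = 0.

Lemma Abmx_hess n (Mj : nat -> 'M[C]_n) : hess_pattern (Abmx Mj).
Proof.
move=> l j hl; rewrite /Abmx; case: eqP => // e; move: hl; rewrite e.
by rewrite ltnNge leqnSn.
Qed.

Lemma Bbmx_hess n (Mj : nat -> 'M[C]_n) : hess_pattern (Bbmx Mj).
Proof.
move=> l j hl; rewrite /Bbmx; case: eqP => [e|_]; first by move: hl; rewrite e.
by case: eqP => // e; move: hl; rewrite e ltnn.
Qed.

Lemma blk_off_lt (N n : nat) (r : 'I_(N * n)) : (r %% n < n)%N.
Proof.
case: n r => [|n] r; last by rewrite ltn_mod.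
by case: r => x; rewrite muln0.
Qed.
Definition blk_off (N n : nat) (r : 'I_(N * n)) : 'I_n := Ordinal (blk_off_lt r).

Definition btrunc (n N : nat) (X : bmx n) : 'M[C]_(N * n) :=
  \matrix_(r, s) X (r %/ n).+1 (s %/ n).+1 (blk_off r) (blk_off s).

(* j-th block (0-indexed: vblock v j is the paper's block j+1) of a
   vector in C^{Nn}; zero for j >= N. *)
Definition vblock (n N : nat) (v : 'cV[C]_(N * n)) (j : nat) : 'cV[C]_n :=
  \col_(a < n) (match @insub _ (fun x => (x < N * n)%N) _ (j * n + a)%N
                with Some r => v r 0 | None => 0 end).

Definition Dmx (k : nat) : 'M[C]_(k, k.+1) :=
  \matrix_(j, l) (if (l : nat) == j.+1 then (j.+1%:R)^-1 else 0).

End Defs.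

From HB Require Import structures.
From mathcomp Require Import all_boot all_order all_algebra.
From mathcomp Require Import all_classical all_reals topology normedtype sequences derive.
From mathcomp.real_closed Require Import complex.
Import Order.TTheory GRing.Theory Num.Theory.
Import numFieldNormedType.Exports.
Local Open Scope ring_scope.
Local Open Scope classical_set_scope.

Set Implicit Arguments.
Unset Strict Implicit.
Unset Printing Implicit Defensive.

(* Since A is block diagonal and B is block upper Hessenberg, the block rows
   of [SA]_N w = [SB]_N q can be checked one at a time.  Using S_{i,1} = 0
   for i >= 2, every block row beyond the first holds as soon as the block
   w_{l+1} equals q_l / l, and the first block row reads
   -M_0 w_1 = sum_j M_j q_j / j; the block S_{i,N+1} lying outside the
   truncation only meets q_N, which vanishes because k < N.  The first block
   column of [SA]_N is (-M_0, 0, ..., 0), so invertibility of [SA]_N forces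
   M_0 to be invertible, and the candidate vector is the unique solution. *)

Lemma unitmx_kernel0 (F : fieldType) n (M : 'M[F]_n) :
  (forall u : 'cV_n, M *m u = 0 -> u = 0) -> M \in unitmx.
Proof.
move=> ker0; rewrite -row_full_unit -cokermx_eq0; apply/eqP/matrixP => a c.
have := ker0 (col c (cokermx M)); rewrite colE mulmxA mulmx_coker mul0mx.
by move=> /(_ erefl)/matrixP/(_ a 0); rewrite -colE !mxE.
Qed.

Section Blocks.
Variables (R : realType) (n N : nat).
Local Notation C := R[i].

Lemma blk_lt l (b : 'I_n) : (l < N)%N -> (l * n + b < N * n)%N.
Proof.
move=> hl; apply: (@leq_trans (l.+1 * n)); first by rewrite mulSnr ltn_add2l.
by rewrite leq_mul2r hl orbT.
Qed.

Lemma blk_div j (a : 'I_n) : ((j * n + a) %/ n = j)%N.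
Proof. by rewrite divnMDl ?divn_small ?addn0 // (leq_ltn_trans _ (ltn_ord a)). Qed.

Lemma blk_offE (r : 'I_(N * n)) l (b : 'I_n) :
  (r : nat) = (l * n + b)%N -> blk_off r = b.
Proof. by move=> e; apply: val_inj; rewrite /= e modnMDl modn_small. Qed.

Lemma vblockE (v : 'cV[C]_(N * n)) j (a : 'I_n) (h : (j * n + a < N * n)%N) :
  vblock v j a 0 = v (Ordinal h) 0.
Proof.
rewrite /vblock mxE (insubT (fun x => (x < N * n)%N) h) /=.
by congr (v _ 0); apply: val_inj.
Qed.

Lemma vblock_ge (v : 'cV[C]_(N * n)) j : (N <= j)%N -> vblock v j = 0.
Proof.
move=> hj; apply/matrixP=> a b; rewrite /vblock !mxE insubF //.
apply/negbTE; rewrite -leqNgt; apply: leq_trans (leq_addr _ _).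
by rewrite leq_mul2r hj orbT.
Qed.

Lemma vblock_ext (u v : 'cV[C]_(N * n)) :
  (forall j, (j < N)%N -> vblock u j = vblock v j) -> u = v.
Proof.
move=> eq_uv; apply/matrixP=> r b; rewrite (ord1 b) {b}.
have n_gt0 : (0 < n)%N by case: n r {eq_uv u v} => [|n'] [x]; rewrite ?muln0.
have r_div : (r %/ n < N)%N by rewrite ltn_divLR // mulnC.
have h : (r %/ n * n + blk_off r < N * n)%N by rewrite /= -divn_eq.
have /matrixP/(_ (blk_off r) 0) := eq_uv _ r_div; rewrite !(vblockE _ h).
by have -> : Ordinal h = r by apply: val_inj; rewrite /= -divn_eq.
Qed.

Lemma vblock0 j : vblock (0 : 'cV[C]_(N * n)) j = 0.
Proof.
by apply/matrixP => a b; rewrite /vblock !mxE; case: insub => [?|]; rewrite ?mxE.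
Qed.

Definition bvec (g : nat -> 'cV[C]_n) : 'cV[C]_(N * n) :=
  \col_(r < N * n) g (r %/ n)%N (blk_off r) 0.

Lemma vblock_bvec g j : (j < N)%N -> vblock (bvec g) j = g j.
Proof.
move=> hj; apply/matrixP=> a b; rewrite (ord1 b) {b}.
by rewrite (vblockE _ (blk_lt a hj)) mxE /= blk_div (blk_offE (l := j) (b := a)).
Qed.

Lemma sum_blocks (F : 'I_(N * n) -> C) :
  \sum_(s < N * n) F s = \sum_(l < N) \sum_(b < n) F (Ordinal (blk_lt b (ltn_ord l))).
Proof.
pose Fn x := if @insub _ (fun x => (x < N * n)%N) 'I_(N * n) x is Some r
             then F r else 0.
transitivity (\sum_(0 <= s < N * n) Fn s).
  by rewrite big_mkord; apply: eq_bigr => s _; rewrite /Fn valK.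
rewrite big_nat_mul big_mkord; apply: eq_bigr => l _.
rewrite -{1}[(l * n)%N]add0n big_addn mulSnr addKn big_mkord.
apply: eq_bigr => b _; rewrite /Fn addnC.
rewrite (insubT (fun x => (x < N * n)%N) (blk_lt b (ltn_ord l))) /=.
by congr F; apply: val_inj.
Qed.

Lemma vblock_btrunc_mul (X : bmx R n) (v : 'cV[C]_(N * n)) j : (j < N)%N ->
  vblock (btrunc N X *m v) j = \sum_(l < N) X j.+1 l.+1 *m vblock v l.
Proof.
move=> hj; apply/matrixP=> a b; rewrite (ord1 b) {b}.
rewrite (vblockE _ (blk_lt a hj)) mxE summxE sum_blocks.
apply: eq_bigr => l _; rewrite mxE; apply: eq_bigr => b _.
rewrite (vblockE _ (blk_lt b (ltn_ord l))) mxE /= !blk_div.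
by rewrite (blk_offE (l := j) (b := a)) // (blk_offE (l := l) (b := b)).
Qed.

End Blocks.

Lemma btrunc_col1_kernel (R : realType) n N (X : bmx R n) (u : 'cV[R[i]]_n) :
  btrunc N.+1 X \in unitmx -> (forall i, X i.+1 1%N *m u = 0) -> u = 0.
Proof.
move=> X_unit Xu0.
pose U := bvec N.+1 (fun l => if l is 0 then u else 0).
have XU0 : btrunc N.+1 X *m U = 0.
  apply: vblock_ext => i hi; rewrite vblock0 vblock_btrunc_mul // big_ord_recl.
  rewrite vblock_bvec // Xu0 add0r big1 // => l _.
  by rewrite lift0 vblock_bvec ?ltnS ?ltn_ord // mulmx0.
have : U = 0 by rewrite -(mulKmx X_unit U) XU0 mulmx0.
by move/(congr1 (fun v => vblock v 0%N)); rewrite vblock_bvec // vblock0.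
Qed.

Section Pencil.
Variables (R : realType) (n : nat) (Mj : nat -> 'M[R[i]]_n).

Lemma Sbmx11 : Sbmx Mj 1 1 = 1%:M.
Proof. by []. Qed.

Lemma Sbmx_row1 l : Sbmx Mj 1 l.+2 = 0.
Proof. by []. Qed.

Lemma Sbmx_col1 i : Sbmx Mj i.+2 1 = 0.
Proof. by []. Qed.

Lemma bmx_mulH_Abmx (S : bmx R n) i j : (0 < j)%N ->
  bmx_mulH S (Abmx Mj) i j = S i j *m Abmx Mj j j.
Proof.
move=> hj; rewrite /bmx_mulH (bigD1_seq j) /=.
- by rewrite big1 ?addr0 // => l hl; rewrite /Abmx (negbTE hl) mulmx0.
- by rewrite mem_index_iota hj ltnS leqnSn.
- by rewrite iota_uniq mem_iota andbT.
Qed.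

Lemma bmx_mulH_Bbmx (S : bmx R n) i j : (0 < j)%N ->
  bmx_mulH S (Bbmx Mj) i j = S i 1%N *m Bbmx Mj 1 j + S i j.+1 *m Bbmx Mj j.+1 j.
Proof.
move=> hj; rewrite /bmx_mulH big_ltn // big_nat_recr //=.
rewrite big_nat_cond big1 ?add0r // => l /andP[/andP[h1 h2] _].
by rewrite /Bbmx (gtn_eqF h1) (ltn_eqF h2) mulmx0.
Qed.

Lemma unitmx_M0 N : btrunc N.+1 (bmx_mulH (Sbmx Mj) (Abmx Mj)) \in unitmx ->
  Mj 0 \in unitmx.
Proof.
move=> SA_unit; apply: unitmx_kernel0 => u M0u.
apply: (btrunc_col1_kernel SA_unit) => i.
by rewrite bmx_mulH_Abmx // /Abmx /= mulmxN mulNmx -mulmxA M0u mulmx0 oppr0.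
Qed.

Definition sol_blocks N (q : 'cV[R[i]]_(N * n)) (w1 : 'cV[R[i]]_n) :
  nat -> 'cV[R[i]]_n :=
  fun l => if l is l'.+1 then (l'.+1%:R)^-1 *: vblock q l' else w1.

Lemma btrunc_SA_mul_sol_blocks N (q : 'cV[R[i]]_(N.+1 * n)) w1 :
  vblock q N = 0 ->
  - Mj 0 *m w1 = \sum_(l < N.+1) (l.+1%:R)^-1 *: (Mj l.+1 *m vblock q l) ->
  btrunc N.+1 (bmx_mulH (Sbmx Mj) (Abmx Mj)) *m bvec N.+1 (sol_blocks q w1) =
  btrunc N.+1 (bmx_mulH (Sbmx Mj) (Bbmx Mj)) *m q.
Proof.
move=> q_last w1_eq; apply: vblock_ext => i hi; rewrite !vblock_btrunc_mul //.
under eq_bigr => l _ do rewrite bmx_mulH_Abmx // vblock_bvec //.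
under [RHS]eq_bigr => l _ do rewrite bmx_mulH_Bbmx //.
case: i hi => [|i] _.
  rewrite big_ord_recl big1 => [|l _]; last by rewrite lift0 Sbmx_row1 !mul0mx.
  rewrite addr0 Sbmx11 mul1mx /Abmx /=; apply: (etrans w1_eq); apply: eq_bigr => l _.
  by rewrite Sbmx_row1 /Bbmx /= mul1mx mul0mx addr0 -scalemxAl.
rewrite big_ord_recl [RHS]big_ord_recr [vblock q ord_max]q_last mulmx0 Monoid.mulm1.
rewrite Sbmx_col1 !mul0mx add0r.
apply: eq_bigr => l _; rewrite lift0 /Abmx /Bbmx /= !eqxx mulmx1 mul0mx add0r.
by rewrite scalemx1 -mulmxA mul_scalar_mx.
Qed.

End Pencil.

Lemma col_Dmx0 (R : realType) k : col 0 (@Dmx R k) = 0.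
Proof. by apply/matrixP => j b; rewrite !mxE. Qed.

Lemma col_Dmx_lift (R : realType) k (j : 'I_k) :
  col (lift 0 j) (@Dmx R k) = (j.+1%:R)^-1 *: delta_mx j 0.
Proof.
apply/matrixP => l b; rewrite [b]ord1 !mxE /= eqSS eq_sym.
have [->|ne] := eqVneq l j; first by rewrite !eqxx /= mulr1.
by rewrite (ifN _ _ ne) /= mulr0.
Qed.

Lemma col0_deltaDmx (R : realType) n k (u : 'cV[R[i]]_n) (Q : 'M_(n, k)) :
  col 0 (u *m delta_mx 0 0 + Q *m @Dmx R k) = u.
Proof.
by rewrite colE mulmxDl -!mulmxA mul_delta_mx -!colE col_id col_Dmx0 mulmx0 addr0.
Qed.

Lemma col_lift_deltaDmx (R : realType) n k (u : 'cV[R[i]]_n) (Q : 'M_(n, k)) (j : 'I_k) :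
  col (lift 0 j) (u *m delta_mx 0 0 + Q *m @Dmx R k) = (j.+1%:R)^-1 *: col j Q.
Proof.
rewrite [LHS]colE mulmxDl -!mulmxA mul_delta_mx_0 ?neq_lift // mulmx0 add0r.
by rewrite -colE col_Dmx_lift -scalemxAr -colE.
Qed.

Theorem theorem3 (R : realType) (n p N k : nat) (r : R) (hr : 0 < r)
  (f : 'I_p -> R[i] -> R[i]) (A : 'I_p -> 'M[R[i]]_n)
  (hf : forall m : 'I_p, analytic_on (disk0 r) (f m))
  (hsym : forall z : R[i], disk0 r z ->
            (\sum_(m < p) f m z *: A m)^T = \sum_(m < p) f m z *: A m)
  (hk : (0 < k)%N) (hkN : (k.+1 <= N)%N)
  (hS : btrunc (2 * N) (Sbmx (mxderiv0 (fun z => \sum_(m < p) f m z *: A m)))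
          \in unitmx)
  (hSA : btrunc N (bmx_mulH (Sbmx (mxderiv0 (fun z => \sum_(m < p) f m z *: A m)))
                            (Abmx (mxderiv0 (fun z => \sum_(m < p) f m z *: A m))))
          \in unitmx)
  (Q : 'M[R[i]]_(n, k)) (q : 'cV[R[i]]_(N * n))
  (hq1 : forall j : 'I_k, vblock q j = col j Q)
  (hq2 : forall j : nat, (k <= j)%N -> vblock q j = 0) :
  let Mj := mxderiv0 (fun z => \sum_(m < p) f m z *: A m) in
  let w := invmx (btrunc N (bmx_mulH (Sbmx Mj) (Abmx Mj)))
             *m btrunc N (bmx_mulH (Sbmx Mj) (Bbmx Mj)) *m q in
  let w1 := - invmx (Mj 0%N) *m \sum_(j < k) (j.+1%:R)^-1 *: (Mj j.+1 *m col j Q) in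
  let W := w1 *m delta_mx 0 0 + Q *m @Dmx R k in
  (forall j : 'I_k.+1, vblock w j = col j W) /\
  (forall j : nat, (k.+1 <= j)%N -> vblock w j = 0).
Proof.
case: N => [//|N] in hkN hS hSA q hq1 hq2 *; move=> Mj w w1 W.
have w1_eq : - Mj 0 *m w1 = \sum_(l < N.+1) (l.+1%:R)^-1 *: (Mj l.+1 *m vblock q l).
  rewrite /w1 !mulNmx mulmxN opprK mulKVmx ?(unitmx_M0 hSA) //.
  under eq_bigr => j _ do rewrite -hq1.
  rewrite (big_ord_widen _ (fun l => (l.+1%:R)^-1 *: (Mj l.+1 *m vblock q l)) (ltnW hkN)).
  rewrite big_mkcond; apply: eq_bigr => l _.
  by case: ltnP => // hl; rewrite hq2 ?mulmx0 ?scaler0.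
have w_eq : w = bvec N.+1 (sol_blocks q w1).
  by rewrite /w -mulmxA -(btrunc_SA_mul_sol_blocks _ w1_eq) ?hq2 ?mulKmx.
have sol_W (j : 'I_k.+1) : sol_blocks q w1 j = col j W.
  case: (unliftP 0 j) => [l ->|->]; last by rewrite /W col0_deltaDmx.
  by rewrite /W col_lift_deltaDmx -hq1 lift0.
split => [j|j hj].
  rewrite w_eq vblock_bvec; first exact: sol_W.
  exact: leq_trans (ltn_ord j) hkN.
have [hjN|hjN] := ltnP j N.+1; last by rewrite vblock_ge.
rewrite w_eq vblock_bvec //; case: j hj hjN => // j hj _.
by rewrite /= (hq2 j hj) scaler0.
Qed.
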